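(* Fix a node $t$ whose neighbor set is partitioned into a primary set $\mathcal{S}^*$ and a secondary set $\mathcal{S}^c$, with nonnegative attention weights $\alpha_{t,s}$ and message vectors $m_{s\to t}\in\mathbb{R}^d$, and one-step aggregation $h_t=\sum_{s\in\mathcal{S}^*\cup\mathcal{S}^c}\alpha_{t,s}\,m_{s\to t}$. Let $A^*(t):=\sum_{s\in\mathcal{S}^*}\alpha_{t,s}$ and $h_t^*:=\sum_{s\in\mathcal{S}^*}\alpha_{t,s}\,m_{s\to t}$. Let the classifier logits be $z_k=w_k^\top h_t$ with $w_k\in\mathbb{R}^d$, and let $\mathcal{P}(t)$ be the set of positive labels of $t$, with $L:=|\mathcal{P}(t)|$. Assume (i) $\|m_{s\to t}\|\le M$ for all $s\in\mathcal{S}^*$, and (ii) there exist constants $a>0$ and $b\le aM$ such that $z_k\le a\|h_t^*\|+b$ for each positive label $k\in\mathcal{P}(t)$. Then $$\sum_{k\in\mathcal{P}(t)}-\log\sigma(z_k)\;\ge\;L\cdot\Bigl(-\log\sigma\bigl(aMA^*(t)+b\bigr)\Bigr).$$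
   Context: $\sigma(x)=1/(1+e^{-x})$ is the logistic sigmoid. The attention weights are softmax weights over the neighbors of $t$ (in particular nonnegative). *)

From mathcomp Require Import all_boot all_order all_algebra.
From mathcomp Require Import all_classical all_reals all_analysis.
Set Implicit Arguments. Unset Strict Implicit. Unset Printing Implicit Defensive.
Import Order.TTheory GRing.Theory Num.Theory.
Local Open Scope ring_scope.

Definition sigmoid {R : realType} (x : R) : R := 1 / (1 + expR (- x)).

Definition enorm {R : realType} {d : nat} (v : 'rV[R]_d) : R :=
  Num.sqrt (\sum_(i < d) v 0 i ^+ 2).

Definition dotv {R : realType} {d : nat} (w h : 'rV[R]_d) : R :=
  \sum_(i < d) w 0 i * h 0 i.

(* By the triangle inequality and (i), ||h_t^*|| <= M A^*(t), so by (ii) every positive logit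
   satisfies z_k <= a M A^*(t) + b; since x |-> -log sigma(x) is decreasing, each of the L
   terms of the loss is at least -log sigma(a M A^*(t) + b). *)

From mathcomp Require Import all_boot all_order all_algebra.
From mathcomp Require Import all_classical all_reals all_analysis.
From mathcomp Require Import ring lra.
Import Order.TTheory GRing.Theory Num.Theory.
Local Open Scope ring_scope.

Section EuclideanNorm.
Variables (R : realType) (d : nat).
Implicit Types u v : 'rV[R]_d.

Lemma dotvv_ge0 u : 0 <= dotv u u.
Proof. by apply: sumr_ge0 => i _; rewrite -expr2 sqr_ge0. Qed.

Lemma enorm_sqr u : enorm u ^+ 2 = dotv u u.
Proof.
have -> : enorm u = Num.sqrt (dotv u u).
  by congr Num.sqrt; apply: eq_bigr => i _; rewrite expr2.
by rewrite sqr_sqrtr // dotvv_ge0.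
Qed.

Lemma enorm_ge0 u : 0 <= enorm u.
Proof. exact: sqrtr_ge0. Qed.

Lemma enorm0 : enorm (0 : 'rV[R]_d) = 0.
Proof. by rewrite /enorm big1 ?sqrtr0 // => i _; rewrite mxE expr0n. Qed.

Lemma enormZ c u : enorm (c *: u) = `|c| * enorm u.
Proof.
rewrite /enorm -sqrtr_sqr -sqrtrM ?sqr_ge0 //; congr Num.sqrt.
by rewrite mulr_sumr; apply: eq_bigr => i _; rewrite !mxE; ring.
Qed.

Lemma dotvvD u v : dotv (u + v) (u + v) = dotv u u + dotv v v + 2 * dotv u v.
Proof.
rewrite /dotv mulr_sumr -!big_split /=.
by apply: eq_bigr => i _; rewrite !mxE; ring.
Qed.

Lemma Lagrange_identity u v :
  \sum_(i < d) \sum_(j < d) (u 0 i * v 0 j - u 0 j * v 0 i) ^+ 2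
    = (dotv u u * dotv v v - dotv u v ^+ 2) *+ 2.
Proof.
(* The two copies of |u|^2 |v|^2 are expanded with the summation indices in opposite orders. *)
have uuvv : dotv u u * dotv v v = \sum_(i < d) \sum_(j < d) u 0 i ^+ 2 * v 0 j ^+ 2.
  rewrite mulr_suml; apply: eq_bigr => i _; rewrite mulr_sumr.
  by apply: eq_bigr => j _; rewrite !expr2.
have vvuu : dotv u u * dotv v v = \sum_(i < d) \sum_(j < d) u 0 j ^+ 2 * v 0 i ^+ 2.
  rewrite mulrC mulr_suml; apply: eq_bigr => i _; rewrite mulr_sumr.
  by apply: eq_bigr => j _; rewrite !expr2 mulrC.
have uv2 : dotv u v ^+ 2 = \sum_(i < d) \sum_(j < d) u 0 i * v 0 i * (u 0 j * v 0 j).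
  by rewrite expr2 mulr_suml; apply: eq_bigr => i _; rewrite mulr_sumr.
rewrite mulrnBl mulr2n {1}uuvv vvuu uv2 -big_split /= -sumrMnl -sumrB.
apply: eq_bigr => i _; rewrite -big_split /= -sumrMnl -sumrB.
by apply: eq_bigr => j _; ring.
Qed.

Lemma dotv_CauchySchwarz u v : dotv u v ^+ 2 <= dotv u u * dotv v v.
Proof.
rewrite -subr_ge0 -(pmulrn_lge0 _ (isT : (0 < 2)%N)) -Lagrange_identity.
by apply: sumr_ge0 => i _; apply: sumr_ge0 => j _; rewrite sqr_ge0.
Qed.

Lemma dotv_le_enorm u v : dotv u v <= enorm u * enorm v.
Proof.
apply: le_trans (ler_norm _) _.
rewrite -(ler_pXn2r (isT : (0 < 2)%N)) ?nnegrE ?mulr_ge0 ?enorm_ge0 //.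
by rewrite real_normK ?num_real // exprMn !enorm_sqr dotv_CauchySchwarz.
Qed.

Lemma enormD u v : enorm (u + v) <= enorm u + enorm v.
Proof.
rewrite -(ler_pXn2r (isT : (0 < 2)%N)) ?nnegrE ?addr_ge0 ?enorm_ge0 //.
have := dotv_le_enorm u v.
rewrite sqrrD !enorm_sqr dotvvD -!enorm_sqr; lra.
Qed.

Lemma enorm_sum (I : finType) (A : {pred I}) (f : I -> 'rV[R]_d) :
  enorm (\sum_(i in A) f i) <= \sum_(i in A) enorm (f i).
Proof.
apply: (big_ind2 (fun u r => enorm u <= r)) => //; first by rewrite enorm0.
by move=> u1 r1 u2 r2 le1 le2; apply: le_trans (enormD u1 u2) (lerD le1 le2).
Qed.

Lemma enorm_wsum_le (I : finType) (A : {pred I}) (c : I -> R) (f : I -> 'rV[R]_d)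
    (M : R) :
  {in A, forall i, 0 <= c i} -> {in A, forall i, enorm (f i) <= M} ->
  enorm (\sum_(i in A) c i *: f i) <= M * \sum_(i in A) c i.
Proof.
move=> c_ge0 f_le; apply: le_trans (enorm_sum _ _ _) _.
rewrite mulr_sumr; apply: ler_sum => i iA.
by rewrite enormZ ger0_norm ?c_ge0 // mulrC ler_wpM2r ?c_ge0 ?f_le.
Qed.

End EuclideanNorm.

Section Sigmoid.
Variable R : realType.
Implicit Types x y : R.

Lemma sigmoid_gt0 x : 0 < sigmoid x.
Proof. by rewrite /sigmoid div1r invr_gt0 ltr_wpDr ?expR_ge0. Qed.

Lemma ler_sigmoid x y : (sigmoid x <= sigmoid y) = (x <= y).
Proof.
rewrite /sigmoid !div1r lef_pV2 ?posrE ?ltr_wpDr ?expR_ge0 //.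
by rewrite lerD2l ler_expR lerN2.
Qed.

Lemma ler_nln_sigmoid x y : (- ln (sigmoid y) <= - ln (sigmoid x)) = (x <= y).
Proof. by rewrite lerN2 ler_ln ?posrE ?sigmoid_gt0 // ler_sigmoid. Qed.

End Sigmoid.

Theorem theoremA2 (R : realType) (d : nat) (N K : finType)
  (Sstar : {set N}) (alpha : N -> R) (m : N -> 'rV[R]_d)
  (w : K -> 'rV[R]_d) (P : {set K}) (M a b : R) :
  (forall s, 0 <= alpha s) ->
  let h := \sum_(s : N) alpha s *: m s in
  let hstar := \sum_(s in Sstar) alpha s *: m s in
  let Astar := \sum_(s in Sstar) alpha s in
  let z := fun k => dotv (w k) h in
  (forall s, s \in Sstar -> enorm (m s) <= M) ->
  0 < a -> b <= a * M ->
  (forall k, k \in P -> z k <= a * enorm hstar + b) ->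
  \sum_(k in P) - ln (sigmoid (z k))
    >= #|P|%:R * (- ln (sigmoid (a * M * Astar + b))).
Proof.
move=> alpha_ge0 h hstar Astar z m_le a_gt0 _ z_le.
have hstar_le : enorm hstar <= M * Astar.
  by apply: enorm_wsum_le => s sS; [exact: alpha_ge0 | exact: m_le].
rewrite mulr_natl -sumr_const; apply: ler_sum => k kP.
rewrite ler_nln_sigmoid (le_trans (z_le k kP)) // lerD2r -mulrA.
by rewrite ler_pM2l.
Qed.
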